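(* For every $\epsilon>0$ there exists $k_0$ such that every zero-error variable-length $(k,N)$ network code for the network in the context with $k\ge k_0$ has rate $$\frac{k}{\mathrm E N\,\log_2|\mathcal Z|}\ \le\ \frac{8}{9}+\epsilon .$$ More precisely, every zero-error $(k,N)$ code satisfies $\frac{k}{\mathrm EN\log_2|\mathcal Z|}\le \frac{H(N)}{\mathrm EN\log_2|\mathcal Z|}+\frac{2}{2.25}$ up to a correction term vanishing as $k\to\infty$, where $2.25=H(\boldsymbol\Sigma(1))+0.75(\log_23-1)$.
   Context: Network: sources $s_1,s_2,s_3$, terminal $t$, edges $(s_3,s_1),(s_3,s_2),(s_1,t),(s_2,t)$; $s_j$ observes $\mathbf X_j\in\{0,1\}^k$, all $3k$ bits i.i.d. uniform on $\{0,1\}$; $s_1,s_2$ receive $\mathbf X_3$. $\mathcal Z$ is a finite alphabet, $|\mathcal Z|\ge2$. A variable-length $(k,N)$ network code: encoders $\phi_1,\phi_2:\{0,1\}^k\times\{0,1\}^k\to\mathcal Z^*$ (finite sequences over $\mathcal Z$) giving $\mathbf Z_1=\phi_1(\mathbf X_1,\mathbf X_3)$ on edge $(s_1,t)$ and $\mathbf Z_2=\phi_2(\mathbf X_2,\mathbf X_3)$ on edge $(s_2,t)$; a positive-integer-valued stopping time $N$ with $\mathrm EN<\infty$ for the sequence of pairs $(\mathbf Z_1(m),\mathbf Z_2(m))_{m\ge1}$; a decoder $\hat{\boldsymbol\Sigma}=\psi(\mathbf Z_1^N,\mathbf Z_2^N)\in\{0,1,2,3\}^k$ with $\mathbf Z_j^N$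 the first $N$ symbols. $\boldsymbol\Sigma=\mathbf X_1+\mathbf X_2+\mathbf X_3$ (componentwise integer sum); zero-error means $\Pr(\hat{\boldsymbol\Sigma}\neq\boldsymbol\Sigma)=0$. The rate of the code is $k/(\mathrm EN\log_2|\mathcal Z|)$ and the computing capacity $\mathcal C$ is the supremum of rates of zero-error codes. $H$ is Shannon entropy in bits. *)

From mathcomp Require Import all_boot.
From Stdlib Require Import Reals.
Set Implicit Arguments. Unset Strict Implicit. Unset Printing Implicit Defensive.

Definition bvec (k : nat) := {ffun 'I_k -> bool}.

(* an outcome (X1, X2, X3) of the 3k i.i.d. uniform bits:
   for x : outcome k, x.1.1 = X1, x.1.2 = X2, x.2 = X3 *)
Definition outcome (k : nat) := (bvec k * bvec k * bvec k)%type.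

(* A variable-length (k,N) network code over the alphabet Z:
   encoders phi1, phi2 (each sees its own source and X3), the stopping
   time N (as a random variable, i.e. a function of the outcome) and the
   decoder psi with values in {0,1,2,3}^k. *)
Record vl_code (Z : finType) (k : nat) := VLCode {
  phi1 : bvec k -> bvec k -> seq Z;
  phi2 : bvec k -> bvec k -> seq Z;
  stopN : outcome k -> nat;
  psi : seq Z -> seq Z -> {ffun 'I_k -> 'I_4}
}.

Definition Z1 (Z : finType) k (c : vl_code Z k) (x : outcome k) : seq Z :=
  phi1 c x.1.1 x.2.
Definition Z2 (Z : finType) k (c : vl_code Z k) (x : outcome k) : seq Z :=
  phi2 c x.1.2 x.2.

Definition Sigma k (x : outcome k) (i : 'I_k) : nat :=
  (nat_of_bool (x.1.1 i) + nat_of_bool (x.1.2 i) + nat_of_bool (x.2 i))%N.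

(* N is a positive-integer-valued stopping time for the sequence of pairs
   (Z1(m), Z2(m)), m >= 1: the first N symbols of both edges exist, and
   the event {N = n} is determined by the first n symbols of Z1 and Z2. *)
Definition is_stopping_time (Z : finType) k (c : vl_code Z k) : Prop :=
  (forall x, 0 < stopN c x)%N /\
  (forall x, stopN c x <= size (Z1 c x) /\ stopN c x <= size (Z2 c x))%N /\
  (forall (x x' : outcome k) (n : nat), stopN c x = n ->
     take n (Z1 c x) = take n (Z1 c x') ->
     take n (Z2 c x) = take n (Z2 c x') -> stopN c x' = n).

(* zero error: since all outcomes have positive probability (uniform),
   Pr(hat Sigma <> Sigma) = 0 iff the decoder is correct on every outcome. *)
Definition zero_error (Z : finType) k (c : vl_code Z k) : Prop :=
  is_stopping_time c /\
  forall (x : outcome k) (i : 'I_k),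
    nat_of_ord (psi c (take (stopN c x) (Z1 c x)) (take (stopN c x) (Z2 c x)) i)
    = Sigma x i.

Definition expN (Z : finType) k (c : vl_code Z k) : R :=
  (INR (\sum_(x : outcome k) stopN c x) / INR (2 ^ (3 * k)))%R.

Definition log2 (y : R) : R := (ln y / ln 2)%R.

Definition rate (Z : finType) k (c : vl_code Z k) : R :=
  (INR k / (expN c * log2 (INR #|Z|)))%R.

(* A zero-error code sends, for each outcome x, the word of its first N(x)
   symbol pairs; since N is a stopping time these words form a prefix-free
   set, and the word determines Sigma.  Given the word, x is determined by X3
   on the m(x) positions where Sigma is 1 or 2 (elsewhere X3 is read off
   Sigma), so a weighted Kraft inequality gives
   sum_x 2^-m(x) |Z|^-2N(x) <= 1.  AM-GM, i.e. Gibbs' inequality against the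
   uniform distribution on the 2^3k outcomes, turns this into
   3k <= E m + 2 E N log2|Z|, and E m = 3k/4 because each position has
   Sigma in {0, 3} with probability 1/4.  Hence 9k/4 <= 2 E N log2|Z|: the
   rate is at most 8/9 for every k, with no H(N) correction. *)

From mathcomp Require Import all_boot order ssralg ssrnum rat.
From Stdlib Require Import Reals Lra.
From mathcomp Require Import ssrnat zify.
Set Implicit Arguments. Unset Strict Implicit. Unset Printing Implicit Defensive.

Lemma weighted_kraft (T A : finType) (f : T -> nat) (B L : nat) (w : T -> seq A)
    (P : pred T) :
    (forall x, P x -> size (w x) <= L) ->
    {in P &, forall x y, prefix (w x) (w y) -> w x = w y} ->
    (forall s, \sum_(x | P x && (w x == s)) f x <= B) ->
  \sum_(x | P x) f x * #|A| ^ (L - size (w x)) <= B * #|A| ^ L.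
Proof.
have nil_case L' (w' : T -> seq A) (P' : pred T) :
    (forall x, P' x -> w' x = [::]) ->
    (forall s, \sum_(x | P' x && (w' x == s)) f x <= B) ->
  \sum_(x | P' x) f x * #|A| ^ (L' - size (w' x)) <= B * #|A| ^ L'.
  move=> w'_nil w'_fiber.
  rewrite (eq_bigl (fun x => P' x && (w' x == [::]))) => [|x]; last first.
    by case P'x: (P' x); rewrite //= w'_nil.
  rewrite (eq_bigr (fun x => f x * #|A| ^ L')) => [|x /andP[_ /eqP ->]];
    last by rewrite subn0.
  by rewrite -big_distrl leq_mul2r w'_fiber orbT.
elim: L w P => [|L IH] w P size_w prefix_w fiber_w.
  by apply: nil_case => // x /size_w; rewrite leqn0 size_eq0 => /eqP.
have [/existsP[x0 /andP[Px0 /eqP w0]] | no_nil] :=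
  boolP [exists x, P x && (w x == [::])].
  apply: nil_case => // x Px; symmetry; rewrite -w0.
  by apply: prefix_w; rewrite // w0 prefix0s.
have w_nonnil x : P x -> w x != [::].
  by move=> Px; apply: contraNneq no_nil => wx; apply/existsP; exists x; rewrite Px wx.
have [x1 Px1 | P0] := pickP P; last by rewrite big_pred0.
case: (w x1) (w_nonnil x1 Px1) => [//|a0 _] _.
rewrite (partition_big (fun x => head a0 (w x)) predT) //=.
apply: (@leq_trans (\sum_(a : A) B * #|A| ^ L)); last first.
  by rewrite sum_nat_const expnS mulnCA.
apply: leq_sum => a _.
pose Pa x := P x && (head a0 (w x) == a).
apply: leq_trans (IH (fun x => behead (w x)) Pa _ _ _).
- apply: eq_leq; apply: eq_bigr => x /andP[Px _].
  by case: (w x) (w_nonnil x Px) => //= b s _; rewrite subSS.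
- move=> x /andP[Px _]; have := size_w x Px.
  by case: (w x) (w_nonnil x Px).
- move=> x y /andP[Px /eqP hx] /andP[Py /eqP hy]; have := prefix_w x y Px Py.
  case: (w x) hx (w_nonnil x Px) => // b s /= -> _.
  case: (w y) hy (w_nonnil y Py) => // b' s' /= -> _ pre_eq pre_s.
  by rewrite eqxx pre_s in pre_eq; case: (pre_eq isT).
- move=> s; apply: leq_trans (fiber_w (a :: s)); apply: eq_leq.
  apply: eq_bigl => x; rewrite /Pa; case Px: (P x) => //=.
  by case: (w x) (w_nonnil x Px) => //= b t _; rewrite eqseq_cons.
Qed.

Section AMGM.
Import GRing.Theory Num.Theory Order.TTheory.
Local Open Scope ring_scope.

Lemma card_pow_card_le_prod (T : finType) (a t : T -> nat) (D : nat) :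
    (0 < D)%N -> (forall x, a x * t x = D)%N -> (\sum_x t x <= D)%N ->
  (#|T| ^ #|T| <= \prod_x a x)%N.
Proof.
move=> D_gt0 atD sum_t.
have [a_gt0 t_gt0] : (forall x, 0 < a x)%N /\ (forall x, 0 < t x)%N.
  by split=> x; move: D_gt0; rewrite -(atD x) muln_gt0 => /andP[].
have inv_a x : (a x)%:R^-1 = (t x)%:R / D%:R :> rat.
  by rewrite -(atD x) natrM invfM mulrCA divff ?mulr1 // pnatr_eq0 -lt0n.
have amgm : \prod_(x in predT) ((a x)%:R^-1 *+ #|T|)
             <= (\sum_(x in predT) (a x)%:R^-1) ^+ #|T| :> rat.
  by apply: leif_AGM_scaled => x _; rewrite mulrn_wge0 // invr_ge0.
have sum_le1 : \sum_(x in predT) (a x)%:R^-1 <= 1 :> rat.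
  under eq_bigr do rewrite inv_a.
  by rewrite -mulr_suml -natr_sum ler_pdivrMr ?ltr0n // mul1r ler_nat.
have : \prod_(x in predT) ((a x)%:R^-1 *+ #|T|) <= 1 :> rat.
  by apply: le_trans amgm _; rewrite exprn_ile1 ?sumr_ge0 // => x _; rewrite invr_ge0.
under eq_bigr do rewrite -[_ *+ #|T|]mulr_natl.
rewrite big_split /= prodr_const prodfV -natr_prod -natrX.
by rewrite ler_pdivrMr ?ltr0n ?prodn_gt0 // mul1r ler_nat.
Qed.

End AMGM.

Definition const_col k (x : outcome k) (i : 'I_k) : bool :=
  (x.1.1 i == x.2 i) && (x.1.2 i == x.2 i).

Definition n_nonconst k (x : outcome k) : nat := #|[pred i | ~~ const_col x i]|.

Lemma const_colE k (x : outcome k) i :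
  const_col x i = (Sigma x i == 0) || (Sigma x i == 3).
Proof. by rewrite /const_col /Sigma; case: (x.1.1 i) (x.1.2 i) (x.2 i) => [] [] []. Qed.

Lemma const_col_X3 k (x : outcome k) i : const_col x i -> x.2 i = (Sigma x i == 3).
Proof. by rewrite /const_col /Sigma; case: (x.1.1 i) (x.1.2 i) (x.2 i) => [] [] []. Qed.

Lemma n_nonconst_le k (x : outcome k) : n_nonconst x <= k.
Proof. by apply: leq_trans (max_card _) _; rewrite card_ord. Qed.

Lemma card_predI_involution (T : finType) (g : T -> T) (P Q : pred T) :
    involutive g -> (forall x, P (g x) = ~~ P x) -> (forall x, Q (g x) = Q x) ->
  2 * #|[predI Q & P]| = #|Q|.
Proof.
move=> gK gP gQ; rewrite mul2n -addnn -[in RHS](cardID P Q); congr (_ + _).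
rewrite -(card_image (inv_inj gK)); apply: eq_card => x.
rewrite -[x in x \in image _ _]gK (mem_image (inv_inj gK)) !inE.
by rewrite [_ \in Q]gQ [_ \in P]gP andbC.
Qed.

Definition flip_at k (i : 'I_k) (v : bvec k) : bvec k := [ffun j => (j == i) (+) v j].

Lemma flip_atK k (i : 'I_k) : involutive (flip_at i).
Proof. by move=> v; apply/ffunP => j; rewrite !ffunE addbA addbb. Qed.

Lemma flip_at_id k (i : 'I_k) v : flip_at i v i = ~~ v i.
Proof. by rewrite ffunE eqxx. Qed.

Lemma card_const_col k (i : 'I_k) :
  4 * #|[pred x : outcome k | const_col x i]| = #|{: outcome k}|.
Proof.
pose P1 (x : outcome k) := x.1.1 i == x.2 i.
pose P2 (x : outcome k) := x.1.2 i == x.2 i.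
pose g1 (x : outcome k) : outcome k := ((flip_at i x.1.1, x.1.2), x.2).
pose g2 (x : outcome k) : outcome k := ((x.1.1, flip_at i x.1.2), x.2).
have g1K : involutive g1 by case=> [[a b] d]; rewrite /g1 /= flip_atK.
have g2K : involutive g2 by case=> [[a b] d]; rewrite /g2 /= flip_atK.
have half1 : 2 * #|[predI P2 & P1]| = #|P2|.
  apply: (@card_predI_involution _ g1 P1 P2 g1K) => // x.
  by rewrite /P1 /= flip_at_id; case: (x.1.1 i) (x.2 i) => [] [].
have half2 : 2 * #|[predI predT & P2]| = #|{: outcome k}|.
  apply: (@card_predI_involution _ g2 P2 predT g2K) => // x.
  by rewrite /P2 /= flip_at_id; case: (x.1.2 i) (x.2 i) => [] [].
have -> : #|[pred x : outcome k | const_col x i]| = #|[predI P2 & P1]|.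
  by apply: eq_card => x; rewrite !inE andbC.
have card_P2 : #|P2| = #|[predI predT & P2]| by apply: eq_card.
by rewrite -half2 -card_P2 -half1 mulnA.
Qed.

Lemma sum_n_nonconst k :
  4 * \sum_(x : outcome k) n_nonconst x = 3 * k * #|{: outcome k}|.
Proof.
have -> : \sum_(x : outcome k) n_nonconst x =
          \sum_(i < k) #|[pred x : outcome k | ~~ const_col x i]|.
  rewrite (eq_bigr (fun x => \sum_(i | ~~ const_col x i) 1)) => [|x _]; last first.
    by rewrite sum1_card.
  rewrite (exchange_big_dep predT) //=; apply: eq_bigr => i _.
  by rewrite -sum1_card.
rewrite big_distrr /= (eq_bigr (fun=> 3 * #|{: outcome k}|)) => [|i _].
  by rewrite sum_nat_const card_ord mulnA [k * 3]mulnC.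
have card_split : #|[pred x : outcome k | const_col x i]|
    + #|[pred x : outcome k | ~~ const_col x i]| = #|{: outcome k}|.
  apply: etrans (cardC [pred x : outcome k | const_col x i]).
  by congr (_ + _); apply: eq_card.
have := card_const_col i; lia.
Qed.

Section ZeroErrorCode.
Variables (Z : finType) (k : nat) (c : vl_code Z k).
Hypothesis c_ok : zero_error c.

Definition codeword (x : outcome k) : seq (Z * Z) :=
  zip (take (stopN c x) (Z1 c x)) (take (stopN c x) (Z2 c x)).

Lemma size_codeword x : size (codeword x) = stopN c x.
Proof.
have [_ [/(_ x)[N_le1 N_le2] _]] := c_ok.1.
by rewrite size_zip !size_takel ?minnn.
Qed.

Lemma unzip_codeword x :
  unzip1 (codeword x) = take (stopN c x) (Z1 c x) /\
  unzip2 (codeword x) = take (stopN c x) (Z2 c x).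
Proof.
have [_ [/(_ x)[N_le1 N_le2] _]] := c_ok.1.
by rewrite unzip1_zip ?unzip2_zip // !size_takel.
Qed.

Lemma Sigma_codeword x i :
  Sigma x i = psi c (unzip1 (codeword x)) (unzip2 (codeword x)) i.
Proof. by have [u1 u2] := unzip_codeword x; rewrite u1 u2 c_ok.2. Qed.

Lemma codeword_Sigma x x' : codeword x = codeword x' -> Sigma x =1 Sigma x'.
Proof. by move=> cw_eq i; rewrite !Sigma_codeword cw_eq. Qed.

Lemma codeword_prefix x x' :
  prefix (codeword x) (codeword x') -> codeword x = codeword x'.
Proof.
have [_ [_ N_det]] := c_ok.1.
move=> pre; have N_le : stopN c x <= stopN c x' by rewrite -!size_codeword size_prefix.
move: pre; rewrite prefixE size_codeword => /eqP take_cw.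
have [u1 u2] := unzip_codeword x; have [v1 v2] := unzip_codeword x'.
have N_eq : stopN c x' = stopN c x.
  apply: N_det erefl _ _.
  - by rewrite -u1 -take_cw /unzip1 map_take -/unzip1 v1 take_takel.
  - by rewrite -u2 -take_cw /unzip2 map_take -/unzip2 v2 take_takel.
by rewrite -take_cw -N_eq -size_codeword take_size.
Qed.

Lemma codeword_X3_inj x x' : codeword x = codeword x' -> x.2 = x'.2 -> x = x'.
Proof.
case: x x' => [[a b] d] [[a' b'] d'] cw_eq /= d_eq; subst d'.
have [_ [_ N_det]] := c_ok.1.
(* Replacing X2 by X2' leaves the codeword unchanged, as N is a stopping time. *)
pose y : outcome k := ((a, b'), d).
have [u1 u2] := unzip_codeword ((a, b), d).
have [v1 v2] := unzip_codeword ((a', b'), d).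
have N_eq : stopN c ((a', b'), d) = stopN c ((a, b), d).
  by rewrite -!size_codeword cw_eq.
have N_y : stopN c y = stopN c ((a, b), d).
  by apply: N_det erefl _ _ => //; rewrite -u2 cw_eq v2 N_eq.
have cw_y : codeword y = codeword ((a, b), d).
  by rewrite /codeword N_y -[in RHS]u2 cw_eq v2 N_eq.
have b_eq : b' = b.
  apply/ffunP => i; have := codeword_Sigma cw_y i.
  rewrite /Sigma /= => /addIn/addnI.
  by case: (b' i) (b i) => [] [].
have a_eq : a = a'.
  apply/ffunP => i; have := codeword_Sigma cw_eq i; rewrite /Sigma /= b_eq.
  by move=> /addIn/addIn; case: (a i) (a' i) => [] [].
by rewrite a_eq b_eq.
Qed.

Lemma codeword_fiber_weight s :
  \sum_(x | codeword x == s) 2 ^ (k - n_nonconst x) <= 2 ^ k.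
Proof.
have [x0 /eqP cw_x0 | no_x] := pickP (fun x => codeword x == s); last first.
  by rewrite big_pred0.
have Sigma_fiber x : codeword x == s -> Sigma x =1 Sigma x0.
  by move=> /eqP cw_x; apply: codeword_Sigma; rewrite cw_x cw_x0.
have nc_fiber x : codeword x == s -> n_nonconst x = n_nonconst x0.
  by move=> /Sigma_fiber Sx; apply: eq_card => i; rewrite !inE !const_colE Sx.
rewrite (eq_bigr (fun=> 2 ^ (k - n_nonconst x0))) => [|x /nc_fiber -> //].
rewrite sum_nat_const.
pose X3_off (x : outcome k) : {ffun {i | ~~ const_col x0 i} -> bool} :=
  [ffun j => x.2 (val j)].
have card_fiber : #|[pred x | codeword x == s]| <= 2 ^ n_nonconst x0.
  have := @leq_card_in _ _ X3_off [pred x | codeword x == s].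
  rewrite card_ffun card_bool card_sig; apply=> x x'.
  rewrite !inE => x_s x'_s X3_eq.
  apply: codeword_X3_inj; first by rewrite (eqP x_s) (eqP x'_s).
  apply/ffunP => i; have [const_i | nconst_i] := boolP (const_col x0 i).
    have const_col_fiber y : codeword y == s -> const_col y i.
      by move=> /Sigma_fiber Sy; rewrite const_colE Sy -const_colE.
    rewrite (const_col_X3 (const_col_fiber _ x_s)).
    rewrite (const_col_X3 (const_col_fiber _ x'_s)).
    by rewrite (Sigma_fiber _ x_s) (Sigma_fiber _ x'_s).
  by move/ffunP: X3_eq => /(_ (exist _ i nconst_i)); rewrite !ffunE.
apply: leq_trans (leq_mul card_fiber (leqnn _)) _.
by rewrite -expnD subnKC // n_nonconst_le.
Qed.

Lemma card_outcome_pow_le :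
  #|{: outcome k}| ^ #|{: outcome k}|
    <= 2 ^ (\sum_(x : outcome k) n_nonconst x) * #|{: Z * Z}| ^ (\sum_x stopN c x).
Proof.
set L := \max_x stopN c x; set Q := #|{: Z * Z}|.
have Q_gt0 : 0 < Q.
  pose x0 : outcome k := (([ffun=> false], [ffun=> false]), [ffun=> false]).
  have := c_ok.1.1 x0; rewrite -size_codeword.
  by case: (codeword x0) => // zz _ _; apply/card_gt0P; exists zz.
have kraft := @weighted_kraft _ _ (fun x => 2 ^ (k - n_nonconst x)) (2 ^ k) L
  codeword predT (fun x _ => leq_trans (eq_leq (size_codeword x)) (leq_bigmax x))
  (fun x y _ _ => @codeword_prefix x y) codeword_fiber_weight.
rewrite !expn_sum -big_split /=.
apply: (@card_pow_card_le_prod _ _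
  (fun x => 2 ^ (k - n_nonconst x) * Q ^ (L - stopN c x)) (2 ^ k * Q ^ L)).
- by rewrite muln_gt0 !expn_gt0 Q_gt0.
- move=> x; rewrite mulnACA -!expnD subnKC ?n_nonconst_le // subnKC //.
  exact: leq_bigmax.
- apply: leq_trans kraft; apply: eq_leq.
  by apply: eq_bigr => x _; rewrite size_codeword.
Qed.

End ZeroErrorCode.

Lemma card_outcome k : #|{: outcome k}| = 2 ^ (3 * k).
Proof.
by rewrite !card_prod !card_ffun card_bool card_ord -!expnD; congr (_ ^ _); lia.
Qed.

Lemma zero_error_pow_bound (Z : finType) k (c : vl_code Z k) : zero_error c ->
  2 ^ (9 * k * #|{: outcome k}|) <= #|Z| ^ (8 * \sum_x stopN c x).
Proof.
move=> c_ok; set M := #|{: outcome k}|; set S := \sum_x stopN c x.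
have := card_outcome_pow_le c_ok.
rewrite {1}card_outcome -/M -/S -expnM card_prod mulnn -expnM.
rewrite -(leq_exp2r _ _ (isT : 0 < 4)) expnMn -!expnM.
rewrite [X in 2 ^ X * _]mulnC sum_n_nonconst.
have -> : 3 * k * M * 4 = 3 * k * M + 9 * k * M by lia.
have -> : 2 * S * 4 = 8 * S by lia.
by rewrite expnD leq_pmul2l ?expn_gt0.
Qed.

Section RealBound.
Local Open Scope R_scope.

Lemma expn_pow (m n : nat) : expn m n = Nat.pow m n.
Proof. by elim: n => //= n IH; rewrite expnS IH. Qed.

Lemma ln_le_ln x y : 0 < x -> x <= y -> ln x <= ln y.
Proof.
move=> x_gt0 [x_lt_y | ->]; last exact: Rle_refl.
exact/Rlt_le/ln_increasing.
Qed.

Lemma rate_le_of_pow_le (k M S z : nat) :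
    (0 < M)%N -> (0 < S)%N -> (1 < z)%N ->
    (2 ^ (9 * k * M) <= z ^ (8 * S))%N ->
  INR k / (INR S / INR M * log2 (INR z)) <= 8 / 9.
Proof.
move=> /ltP/lt_0_INR M_gt0 /ltP/lt_0_INR S_gt0 /ltP/lt_1_INR z_gt1 pow_le.
have INR2 : INR 2 = 2 by rewrite /INR; lra.
have ln2_gt0 : 0 < ln 2 by rewrite -ln_1; apply: ln_increasing; lra.
have lnz_gt0 : 0 < ln (INR z) by rewrite -ln_1; apply: ln_increasing; lra.
have key : INR (9 * k * M) * ln 2 <= INR (8 * S) * ln (INR z).
  rewrite -!ln_pow; try lra; apply: ln_le_ln; first by apply: pow_lt; lra.
  by rewrite -INR2 -!pow_INR -!expn_pow; apply/le_INR/leP.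
rewrite !mult_INR /= in key.
have -> : INR k / (INR S / INR M * log2 (INR z))
          = INR k * INR M * ln 2 / (INR S * ln (INR z)).
  by rewrite /log2; field; lra.
have denom_gt0 : 0 < INR S * ln (INR z) by apply: Rmult_lt_0_compat.
apply: (Rmult_le_reg_r _ _ _ denom_gt0).
rewrite /Rdiv Rmult_assoc Rinv_l; lra.
Qed.

End RealBound.

Theorem mainTheorem13 (Z : finType) (hZ : (1 < #|Z|)%N) (eps : R) (heps : (0 < eps)%R) :
  exists k0 : nat, forall (k : nat), (k0 <= k)%N ->
    forall c : vl_code Z k, zero_error c ->
      (rate c <= 8 / 9 + eps)%R.
Proof.
(* The bound holds for every k. *)
exists 0 => k _ c c_ok.
apply: (Rle_trans _ (8 / 9)); last lra.
rewrite /rate /expN -expn_pow -card_outcome.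
apply: rate_le_of_pow_le (zero_error_pow_bound c_ok) => //.
  by rewrite card_outcome expn_gt0.
pose x0 : outcome k := (([ffun=> false], [ffun=> false]), [ffun=> false]).
by rewrite (bigD1 x0) //= addn_gt0 c_ok.1.1.
Qed.
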